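(* Let $(P,\preceq)$ be a poset, $\mathcal{X}:=\{X\subseteq P\mid (X,\preceq)\text{ well-ordered}\}$, $\Lambda$ a set, $\mathcal{I},\mathcal{O}\subseteq\Lambda$ finite disjoint sets, and $s$ a causal $(\mathcal{I},\mathcal{O})$-system over $\mathcal{X}$. Let $i\in\mathcal{I}$, $o\in\mathcal{O}$. Then for every $\mathbf{X}\in\mathcal{X}^{\mathcal{I}\setminus\{i\}}$ there exists a unique $X_i\in\mathcal{X}$ such that $s(\mathbf{X}\cup\{(i,X_i)\})(o)=X_i$.
   Context: $\mathcal{X}^{\mathcal{I}}$ is the set of functions $\mathcal{I}\to\mathcal{X}$. A causal $(\mathcal{I},\mathcal{O})$-system over $\mathcal{X}$ is a function $s:\mathcal{X}^{\mathcal{I}}\to\mathcal{X}^{\mathcal{O}}$ such that for all $\mathbf{X},\mathbf{X}'\in\mathcal{X}^{\mathcal{I}}$, all $o\in\mathcal{O}$ and all $y\in s(\mathbf{X})(o)\mathbin{\triangle}s(\mathbf{X}')(o)$ there exist $i\in\mathcal{I}$ and $x\in\mathbf{X}(i)\mathbin{\triangle}\mathbf{X}'(i)$ with $x\prec y$ (where $\mathbin{\triangle}$ is symmetric difference and $x\prec y$ means $x\preceq y$, $x\ne y$). *)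

From Stdlib Require Import List Classical ClassicalEpsilon.
Set Implicit Arguments.

Definition is_poset (P : Type) (le : P -> P -> Prop) : Prop :=
  (forall x, le x x) /\
  (forall x y, le x y -> le y x -> x = y) /\
  (forall x y z, le x y -> le y z -> le x z).

Definition lt_of (P : Type) (le : P -> P -> Prop) (x y : P) : Prop :=
  le x y /\ x <> y.

Definition well_ordered (P : Type) (le : P -> P -> Prop) (X : P -> Prop) : Prop :=
  (forall x y, X x -> X y -> le x y \/ le y x) /\
  (forall Y : P -> Prop, (forall y, Y y -> X y) -> (exists y, Y y) ->
     exists m, Y m /\ forall y, Y y -> le m y).

Definition WO (P : Type) (le : P -> P -> Prop) : Type :=
  { X : P -> Prop | well_ordered le X }.

Definition symdiff (P : Type) (A B : P -> Prop) (x : P) : Prop :=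
  (A x /\ ~ B x) \/ (B x /\ ~ A x).

Definition finite_set (L : Type) (A : L -> Prop) : Prop :=
  exists l : list L, forall x, A x -> In x l.

Definition disjoint (L : Type) (A B : L -> Prop) : Prop :=
  forall x, A x -> B x -> False.

Definition family (L : Type) (I : L -> Prop) (T : Type) : Type :=
  forall l : { l : L | I l }, T.

Definition causal (P : Type) (le : P -> P -> Prop) (L : Type)
  (I O : L -> Prop) (s : family I (WO le) -> family O (WO le)) : Prop :=
  forall (X X' : family I (WO le)) (o : { l : L | O l }) (y : P),
    symdiff (proj1_sig (s X o)) (proj1_sig (s X' o)) y ->
    exists (i : { l : L | I l }) (x : P),
      symdiff (proj1_sig (X i)) (proj1_sig (X' i)) x /\ lt_of le x y.

Definition extend (L : Type) (I : L -> Prop) (i : L) (T : Type)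
  (X : family (fun l => I l /\ l <> i) T) (Xi : T) : family I T :=
  fun l =>
    match excluded_middle_informative (proj1_sig l = i) with
    | left _ => Xi
    | right h => X (exist _ (proj1_sig l) (conj (proj2_sig l) h))
    end.

(** Write [F A] for the output at [o] when the input at [i] is
    the well-ordered set [A]; causality says that [F A] and [F B] can first
    differ only strictly above a first difference of [A] and [B].  Call [A]
    good if it is a lower set of the chain [F A].  Comparing the least
    elements of [A \ B] and [B \ A] through causality shows that good sets
    form a chain of initial segments of each other, so their union [Z] is
    well-ordered and good.  If [F Z] had elements outside [Z], adding the
    least of them to [Z] would give a larger good set; hence [F Z = Z].
    Any fixed point is good, and the same comparison shows that two
    comparable fixed points coincide.  Finiteness and disjointness of the
    index sets play no role. *)

From Stdlib Require Import Classical ClassicalEpsilon FunctionalExtensionality PropExtensionality.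
Set Implicit Arguments.

Definition least (P : Type) (le : P -> P -> Prop) (D : P -> Prop) (m : P) : Prop :=
  D m /\ forall y, D y -> le m y.

Definition setminus (P : Type) (A B : P -> Prop) (x : P) : Prop := A x /\ ~ B x.

Definition initial_segment (P : Type) (le : P -> P -> Prop) (A B : P -> Prop) : Prop :=
  (forall x, A x -> B x) /\ forall x y, A x -> B y -> le y x -> A y.

Lemma pred_ext (P : Type) (A B : P -> Prop) : (forall x, A x <-> B x) -> A = B.
Proof.
  intros AB; apply functional_extensionality; intros x.
  apply propositional_extensionality; apply AB.
Qed.

Lemma well_ordered_least (P : Type) (le : P -> P -> Prop) (A D : P -> Prop) :
  well_ordered le A -> (forall y, D y -> A y) -> (exists y, D y) ->
  exists m, least le D m.
Proof. intros [_ Hleast] DA [y Dy]; apply Hleast; eauto. Qed.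

Lemma well_ordered_sub (P : Type) (le : P -> P -> Prop) (A B : P -> Prop) :
  well_ordered le A -> (forall x, B x -> A x) -> well_ordered le B.
Proof.
  intros [Htot Hleast] BA; split.
  - intros x y Bx By; apply Htot; auto.
  - intros Y YB; apply Hleast; auto.
Qed.

Lemma well_ordered_add_top (P : Type) (le : P -> P -> Prop) (A : P -> Prop) (m : P) :
  is_poset le -> well_ordered le A -> (forall a, A a -> le a m) ->
  well_ordered le (fun x => A x \/ x = m).
Proof.
  intros [Hrefl _] [Htot Hleast] Am; split.
  - intros x y [Ax| ->] [Ay| ->]; auto.
  - intros Y YA' [y0 Y0].
    destruct (classic (exists y, Y y /\ A y)) as [HYA|HYA].
    + destruct (Hleast (fun y => Y y /\ A y)) as [m' [[Ym' Am'] Hm']]; [tauto|auto|].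
      exists m'; split; auto.
      intros y Yy; destruct (YA' y Yy) as [Ay| ->]; auto.
    + exists m; split.
      * destruct (YA' y0 Y0) as [Ay0| <-]; [exfalso; eauto|auto].
      * intros y Yy; destruct (YA' y Yy) as [Ay| ->]; [exfalso; eauto|auto].
Qed.

Lemma initial_segment_agree (P : Type) (le : P -> P -> Prop) (A B : P -> Prop) (z x : P) :
  initial_segment le A B -> A z -> le x z -> (A x <-> B x).
Proof. intros [AB Hdown] Az xz; split; eauto. Qed.

Section CausalFixedPoint.

Variables (P : Type) (le : P -> P -> Prop) (F : (P -> Prop) -> P -> Prop).
Hypothesis le_poset : is_poset le.
Hypothesis F_wo : forall A, well_ordered le A -> well_ordered le (F A).
Hypothesis F_causal : forall A B y,
  well_ordered le A -> well_ordered le B -> F A y -> ~ F B y ->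
  exists x, symdiff A B x /\ lt_of le x y.

Let le_refl := proj1 le_poset.
Let le_antisym := proj1 (proj2 le_poset).
Let le_trans := proj2 (proj2 le_poset).

Lemma F_agree A B y :
  well_ordered le A -> well_ordered le B ->
  (forall x, lt_of le x y -> (A x <-> B x)) -> (F A y <-> F B y).
Proof.
  intros WA WB AB; split; intros Fy; apply NNPP; intros nFy.
  - destruct (F_causal WA WB Fy nFy) as [x [Hx xy]].
    specialize (AB x xy); unfold symdiff in Hx; tauto.
  - destruct (F_causal WB WA Fy nFy) as [x [Hx xy]].
    specialize (AB x xy); unfold symdiff in Hx; tauto.
Qed.

Lemma least_diff_causal A B a :
  well_ordered le A -> well_ordered le B -> least le (setminus A B) a ->
  F A a -> ~ F B a -> exists x, setminus B A x /\ lt_of le x a.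
Proof.
  intros WA WB [_ Ha] FAa nFBa.
  destruct (F_causal WA WB FAa nFBa) as [x [[AnB|BnA] [xa x_ne_a]]].
  - exfalso; apply x_ne_a, le_antisym; auto.
  - exists x; split; [exact BnA|split; auto].
Qed.

Definition good A := well_ordered le A /\ initial_segment le A (F A).

Lemma good_least_diff_not_le A B a b :
  good A -> good B -> least le (setminus A B) a -> least le (setminus B A) b ->
  ~ le a b.
Proof.
  intros [WA [AFA _]] [WB [_ BFB]] Ha [[Bb nAb] Hb] ab.
  destruct (least_diff_causal WA WB Ha) as [x [BAx [xa _]]].
  - apply AFA, (proj1 Ha).
  - intros FBa; apply (proj2 (proj1 Ha)); eauto.
  - assert (ba : le b a) by (apply le_trans with x; auto).
    assert (a = b) as <- by (apply le_antisym; auto).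
    exact (nAb (proj1 (proj1 Ha))).
Qed.

Lemma good_total A B :
  good A -> good B -> (forall x, A x -> B x) \/ (forall x, B x -> A x).
Proof.
  intros GA GB.
  destruct (classic (forall x, A x -> B x)) as [AB|AB]; [left; exact AB|].
  destruct (classic (forall x, B x -> A x)) as [BA|BA]; [right; exact BA|].
  exfalso.
  destruct (well_ordered_least (setminus A B) (proj1 GA)) as [a Ha].
  { intros x []; auto. }
  { apply not_all_ex_not in AB as [x Hx]; exists x; unfold setminus; tauto. }
  destruct (well_ordered_least (setminus B A) (proj1 GB)) as [b Hb].
  { intros x []; auto. }
  { apply not_all_ex_not in BA as [x Hx]; exists x; unfold setminus; tauto. }
  destruct (classic (F B a)) as [FBa|nFBa].
  - assert (FBb : F B b) by apply (proj1 (proj2 GB)), (proj1 Hb).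
    destruct (proj1 (F_wo (proj1 GB)) a b FBa FBb) as [ab|ba].
    + exact (good_least_diff_not_le GA GB Ha Hb ab).
    + exact (good_least_diff_not_le GB GA Hb Ha ba).
  - destruct (least_diff_causal (proj1 GA) (proj1 GB) Ha) as [x [BAx [xa _]]]; auto.
    { apply (proj1 (proj2 GA)), (proj1 Ha). }
    apply (good_least_diff_not_le GB GA Hb Ha).
    apply le_trans with x; auto; apply (proj2 Hb); auto.
Qed.

Lemma good_sub_least_diff_F A B b :
  good A -> good B -> (forall x, A x -> B x) -> least le (setminus B A) b -> F A b.
Proof.
  intros GA GB AB Hb; apply NNPP; intros nFAb.
  destruct (least_diff_causal (proj1 GB) (proj1 GA) Hb) as [x [[Ax nBx] _]]; auto.
  apply (proj1 (proj2 GB)), (proj1 Hb).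
Qed.

Lemma good_sub_initial A B :
  good A -> good B -> (forall x, A x -> B x) -> initial_segment le A B.
Proof.
  intros GA GB AB; split; [exact AB|].
  intros x y Ax By yx; apply NNPP; intros nAy.
  destruct (well_ordered_least (setminus B A) (proj1 GB)) as [b Hb].
  { intros z []; auto. }
  { exists y; split; auto. }
  apply (proj2 (proj1 Hb)), (proj2 (proj2 GA)) with x; auto.
  - exact (good_sub_least_diff_F GA GB AB Hb).
  - apply le_trans with y; auto; apply (proj2 Hb); split; auto.
Qed.

Definition good_union x := exists A, good A /\ A x.

Lemma good_initial_union A : good A -> initial_segment le A good_union.
Proof.
  intros GA; split; [intros x Ax; exists A; auto|].
  intros x y Ax [B [GB By]] yx.
  destruct (good_total GA GB) as [AB|BA]; auto.
  apply (proj2 (good_sub_initial GA GB AB)) with x; auto.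
Qed.

Lemma good_union_total x y :
  good_union x -> good_union y -> le x y \/ le y x.
Proof.
  intros [A [GA Ax]] [B [GB By]].
  destruct (good_total GA GB) as [AB|BA].
  - apply (proj1 (proj1 GB)); auto.
  - apply (proj1 (proj1 GA)); auto.
Qed.

Lemma good_union_wo : well_ordered le good_union.
Proof.
  split; [exact good_union_total|].
  intros Y YZ [y0 Y0].
  destruct (YZ y0 Y0) as [A [GA Ay0]].
  destruct (well_ordered_least (fun y => Y y /\ A y) (proj1 GA)) as [m [[Ym Am] Hm]].
  { intros y []; auto. }
  { exists y0; auto. }
  exists m; split; auto.
  intros y Yy.
  destruct (good_union_total (YZ m Ym) (YZ y Yy)) as [my|ym]; auto.
  apply Hm; split; auto.
  apply (proj2 (good_initial_union GA)) with m; auto.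
Qed.

Lemma good_union_good : good good_union.
Proof.
  split; [exact good_union_wo|split].
  - intros z [A [GA Az]].
    apply (F_agree (proj1 GA) good_union_wo); [|apply (proj1 (proj2 GA)); auto].
    intros x [xz _]; exact (initial_segment_agree z x (good_initial_union GA) Az xz).
  - intros x y [A [GA Ax]] FZy yx.
    exists A; split; auto.
    apply (proj2 (proj2 GA)) with x; auto.
    apply (F_agree good_union_wo (proj1 GA)); auto.
    intros w [wy _]; symmetry.
    apply (initial_segment_agree x w (good_initial_union GA) Ax).
    apply le_trans with y; auto.
Qed.

Lemma good_lt_new A m : good A -> F A m -> ~ A m -> forall a, A a -> lt_of le a m.
Proof.
  intros [WA [AFA Hdown]] FAm nAm a Aa.
  destruct (proj1 (F_wo WA) a m (AFA a Aa) FAm) as [am|ma].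
  - split; [exact am|]; intros ->; auto.
  - exfalso; apply nAm, Hdown with a; auto.
Qed.

Lemma good_extend A m :
  good A -> least le (setminus (F A) A) m -> good (fun x => A x \/ x = m).
Proof.
  intros GA [[FAm nAm] Hm].
  set (A' := fun x => A x \/ x = m).
  assert (A'_le_m : forall x, A' x -> le x m).
  { intros x [Ax| ->]; [apply (good_lt_new GA FAm nAm); auto|apply le_refl]. }
  assert (WA' : well_ordered le A').
  { apply well_ordered_add_top; auto; [exact (proj1 GA)|].
    intros a Aa; apply A'_le_m; left; auto. }
  assert (F_A'_A : forall x, le x m -> (F A' x <-> F A x)).
  { intros x xm; apply (F_agree WA' (proj1 GA)).
    intros w [wx w_ne_x]; split; [|intros Aw; left; auto].
    intros [Aw| ->]; [auto|exfalso; apply w_ne_x, le_antisym; auto]. }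
  split; [exact WA'|split].
  - intros x A'x; apply F_A'_A; [apply A'_le_m; auto|].
    destruct A'x as [Ax| ->]; [apply (proj1 (proj2 GA)); auto|auto].
  - intros x w A'x FA'w wx.
    assert (wm : le w m) by (apply le_trans with x; auto).
    apply F_A'_A in FA'w; auto.
    destruct (classic (A w)) as [Aw|nAw]; [left; auto|right].
    apply le_antisym; auto; apply Hm; split; auto.
Qed.

Lemma good_union_fixed y : F good_union y <-> good_union y.
Proof.
  split; [|apply (proj1 (proj2 good_union_good))].
  intros FZy; apply NNPP; intros nZy.
  destruct (well_ordered_least (setminus (F good_union) good_union) (F_wo good_union_wo))
    as [m Hm].
  { intros x []; auto. }
  { exists y; split; auto. }
  apply (proj2 (proj1 Hm)).
  exists (fun x => good_union x \/ x = m); split; [|right; auto].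
  exact (good_extend good_union_good Hm).
Qed.

Lemma fixed_good A : well_ordered le A -> (forall y, F A y <-> A y) -> good A.
Proof.
  intros WA FA; split; [exact WA|split].
  - intros x Ax; apply FA; auto.
  - intros x y _ FAy _; apply FA; auto.
Qed.

Lemma F_closed_good_maximal A B :
  good A -> good B -> (forall y, F A y -> A y) -> (forall x, A x -> B x) ->
  forall x, B x -> A x.
Proof.
  intros GA GB FA AB x Bx; apply NNPP; intros nAx.
  destruct (well_ordered_least (setminus B A) (proj1 GB)) as [b Hb].
  { intros z []; auto. }
  { exists x; split; auto. }
  apply (proj2 (proj1 Hb)), FA.
  exact (good_sub_least_diff_F GA GB AB Hb).
Qed.

Lemma fixed_unique A B :
  well_ordered le A -> well_ordered le B ->
  (forall y, F A y <-> A y) -> (forall y, F B y <-> B y) ->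
  forall y, A y <-> B y.
Proof.
  intros WA WB FA FB.
  assert (GA := fixed_good WA FA); assert (GB := fixed_good WB FB).
  destruct (good_total GA GB) as [AB|BA]; intros y; split; auto.
  - apply (F_closed_good_maximal GA GB); auto; intros z; apply FA.
  - apply (F_closed_good_maximal GB GA); auto; intros z; apply FB.
Qed.

Theorem causal_unique_fixed_point :
  exists Z, well_ordered le Z /\ (forall y, F Z y <-> Z y) /\
    forall A, well_ordered le A -> (forall y, F A y <-> A y) -> forall y, A y <-> Z y.
Proof.
  exists good_union; split; [exact good_union_wo|split; [exact good_union_fixed|]].
  intros A WA FA; exact (fixed_unique WA good_union_wo FA good_union_fixed).
Qed.

End CausalFixedPoint.

Section WellOrderedArgument.

Variables (P : Type) (le : P -> P -> Prop) (f : WO le -> P -> Prop).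
Hypothesis le_poset : is_poset le.
Hypothesis f_wo : forall W, well_ordered le (f W).
Hypothesis f_causal : forall W W' y, f W y -> ~ f W' y ->
  exists x, symdiff (proj1_sig W) (proj1_sig W') x /\ lt_of le x y.

Definition on_wo (A : P -> Prop) (y : P) : Prop :=
  exists WA : well_ordered le A, f (exist _ A WA) y.

Lemma on_wo_proj (W : WO le) y : on_wo (proj1_sig W) y <-> f W y.
Proof.
  destruct W as [A WA]; split; [|exists WA; auto].
  intros [WA' fy]; rewrite (proof_irrelevance _ WA WA'); exact fy.
Qed.

Lemma on_wo_wo A : well_ordered le A -> well_ordered le (on_wo A).
Proof.
  intros WA; eapply well_ordered_sub; [exact (f_wo (exist _ A WA))|].
  intros y; apply (on_wo_proj (exist _ A WA)).
Qed.

Lemma on_wo_causal A B y :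
  well_ordered le A -> well_ordered le B -> on_wo A y -> ~ on_wo B y ->
  exists x, symdiff A B x /\ lt_of le x y.
Proof.
  intros WA WB fAy nfBy.
  rewrite (on_wo_proj (exist _ A WA)) in fAy.
  rewrite (on_wo_proj (exist _ B WB)) in nfBy.
  exact (f_causal fAy nfBy).
Qed.

Theorem wo_unique_fixed_point :
  exists W : WO le, f W = proj1_sig W /\
    forall W' : WO le, f W' = proj1_sig W' -> proj1_sig W' = proj1_sig W.
Proof.
  destruct (causal_unique_fixed_point on_wo le_poset on_wo_wo on_wo_causal)
    as [Z [WZ [FZ Zunique]]].
  exists (exist _ Z WZ); split.
  - apply pred_ext; intros y; rewrite <- (on_wo_proj (exist _ Z WZ)); apply FZ.
  - intros W fW; apply pred_ext.
    apply Zunique; [exact (proj2_sig W)|].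
    intros y; rewrite on_wo_proj, fW; reflexivity.
Qed.

End WellOrderedArgument.

Lemma causal_extend (P : Type) (le : P -> P -> Prop) (L : Type) (I O : L -> Prop)
  (s : family I (WO le) -> family O (WO le)) (i : L) (o : { l : L | O l })
  (X : family (fun l => I l /\ l <> i) (WO le)) (W W' : WO le) (y : P) :
  causal s ->
    proj1_sig (s (@extend L I i (WO le) X W) o) y ->
    ~ proj1_sig (s (@extend L I i (WO le) X W') o) y ->
    exists x, symdiff (proj1_sig W) (proj1_sig W') x /\ lt_of le x y.
Proof.
  intros Hs sWy nsW'y.
  destruct (Hs (@extend L I i (WO le) X W) (@extend L I i (WO le) X W') o y
                (or_introl (conj sWy nsW'y))) as [j [x [Hx xy]]].
  exists x; split; [|exact xy].
  unfold extend in Hx.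
  destruct (excluded_middle_informative (proj1_sig j = i)); [exact Hx|].
  unfold symdiff in Hx; tauto.
Qed.

Theorem corollary6p3 (P : Type) (le : P -> P -> Prop) (L : Type)
  (I O : L -> Prop)
  (s : family I (WO le) -> family O (WO le))
  (Hposet : is_poset le)
  (HIfin : finite_set I) (HOfin : finite_set O) (HIO : disjoint I O)
  (Hs : causal s)
  (i : { l : L | I l }) (o : { l : L | O l })
  (X : family (fun l => I l /\ l <> proj1_sig i) (WO le)) :
  exists Xi : WO le,
    proj1_sig (s (@extend L I (proj1_sig i) (WO le) X Xi) o) = proj1_sig Xi /\
    (forall Yi : WO le,
       proj1_sig (s (@extend L I (proj1_sig i) (WO le) X Yi) o) = proj1_sig Yi ->
       proj1_sig Yi = proj1_sig Xi).
Proof.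
  apply (wo_unique_fixed_point
           (fun W => proj1_sig (s (@extend L I (proj1_sig i) (WO le) X W) o)) Hposet).
  - intros W; exact (proj2_sig _).
  - intros W W' y; apply causal_extend; exact Hs.
Qed.
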